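(* Let $T_0$ be a nondegenerate, non-equilateral triangle and let $\mathcal{F}$ be its Brocard porism. For every triangle $T=(A,B,C)\in\mathcal{F}$, listed counterclockwise, all of whose angles are less than $120^\circ$, let $F_a,F_b,F_c$ be its flank triangles. Then the lines $A\,X_{15}(F_a)$, $B\,X_{15}(F_b)$, $C\,X_{15}(F_c)$ concur at the fixed point $X_6(T_0)$, which is independent of $T\in\mathcal{F}$.
   Context: Brocard porism. Let $\Gamma$ be the circumcircle of $T_0$ and $K$ its Brocard inellipse, the ellipse inscribed in $T_0$ whose foci are the two Brocard points of $T_0$. The Brocard porism is the one-parameter (Poncelet) family of triangles inscribed in $\Gamma$ and circumscribed about $K$. It is known that all its members have the same symmedian point $X_6$ as $T_0$. Flank triangles. Identify the plane with $\mathbb{C}$ and put $\rho=e^{2\pi i/3}$. For a counterclockwise triangle $(A,B,C)$, the flank triangles are: $F_a$ with vertices $A,\ A+\rho(C-A),\ A+\rho^{-1}(B-A)$; $F_b$ with vertices $B,\ B+\rho(A-B),\ B+\rho^{-1}(C-B)$; $F_c$ with vertices $C,\ C+\rho(B-C),\ C+\rho^{-1}(A-C)$. These are the triangles between consecutive regular hexagons erected outwardly on the sides. Triangle centers. For a nondegenerate triangle with vertices $V_1,V_2,V_3$, let $\ell_i$ be the length of the side opposite $V_i$ and $\theta_i$ the angle at $V_i$. In homogeneous barycentric coordinates, $X_6=(\ell_1^2:\ell_2^2:\ell_3^2)$ and $X_{15}=(\ell_1\sin(\theta_1+\pi/3):\ell_2\sin(\theta_2+\pi/3):\ell_3\sin(\theta_3+\pi/3))$.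 *)

From Stdlib Require Import Reals Lra.
From Coquelicot Require Import Coquelicot.
Open Scope R_scope.

Definition dist (P Q : C) : R := Cmod (P - Q)%C.
Definition dot (u v : C) : R := fst u * fst v + snd u * snd v.
Definition cross (u v : C) : R := fst u * snd v - snd u * fst v.

Definition nondegenerate (A B C0 : C) : Prop := cross (B - A)%C (C0 - A)%C <> 0.
Definition ccw (A B C0 : C) : Prop := cross (B - A)%C (C0 - A)%C > 0.
Definition equilateral (A B C0 : C) : Prop :=
  dist A B = dist B C0 /\ dist B C0 = dist C0 A.

Definition angle_at (V P Q : C) : R :=
  acos (dot (P - V)%C (Q - V)%C / (Cmod (P - V)%C * Cmod (Q - V)%C)).

Definition bary (w1 w2 w3 : R) (V1 V2 V3 : C) : C :=
  ((RtoC w1 * V1 + RtoC w2 * V2 + RtoC w3 * V3) / RtoC (w1 + w2 + w3))%C.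

Definition X6 (V1 V2 V3 : C) : C :=
  bary (dist V2 V3 ^ 2) (dist V3 V1 ^ 2) (dist V1 V2 ^ 2) V1 V2 V3.

Definition X15 (V1 V2 V3 : C) : C :=
  bary (dist V2 V3 * sin (angle_at V1 V2 V3 + PI / 3))
       (dist V3 V1 * sin (angle_at V2 V3 V1 + PI / 3))
       (dist V1 V2 * sin (angle_at V3 V1 V2 + PI / 3)) V1 V2 V3.

Definition rho : C := (cos (2 * PI / 3), sin (2 * PI / 3)).

Definition flank_a (A B C0 : C) : C * C * C :=
  (A, (A + rho * (C0 - A))%C, (A + / rho * (B - A))%C).
Definition flank_b (A B C0 : C) : C * C * C :=
  (B, (B + rho * (A - B))%C, (B + / rho * (C0 - B))%C).
Definition flank_c (A B C0 : C) : C * C * C :=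
  (C0, (C0 + rho * (B - C0))%C, (C0 + / rho * (A - C0))%C).

Definition X15t (T : C * C * C) : C :=
  let '(V1, V2, V3) := T in X15 V1 V2 V3.

Definition collinear (P Q R0 : C) : Prop := cross (Q - P)%C (R0 - P)%C = 0.

Definition in_closed_triangle (X A B C0 : C) : Prop :=
  exists u v w : R, 0 <= u /\ 0 <= v /\ 0 <= w /\ u + v + w = 1 /\
    X = (RtoC u * A + RtoC v * B + RtoC w * C0)%C.
Definition in_open_triangle (X A B C0 : C) : Prop :=
  exists u v w : R, 0 < u /\ 0 < v /\ 0 < w /\ u + v + w = 1 /\
    X = (RtoC u * A + RtoC v * B + RtoC w * C0)%C.
Definition on_segment (X P Q : C) : Prop :=
  exists t : R, 0 <= t <= 1 /\ X = (P + RtoC t * (Q - P))%C.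

Definition first_brocard_point (O A B C0 : C) : Prop :=
  in_open_triangle O A B C0 /\
  angle_at A O B = angle_at B O C0 /\ angle_at B O C0 = angle_at C0 O A.
Definition second_brocard_point (O A B C0 : C) : Prop :=
  in_open_triangle O A B C0 /\
  angle_at B O A = angle_at C0 O B /\ angle_at C0 O B = angle_at A O C0.

Definition on_ellipse (F1 F2 : C) (s : R) (X : C) : Prop :=
  dist X F1 + dist X F2 = s.

Definition ellipse_inscribed (F1 F2 : C) (s : R) (A B C0 : C) : Prop :=
  dist F1 F2 < s /\
  (forall X, on_ellipse F1 F2 s X -> in_closed_triangle X A B C0) /\
  (exists X, on_ellipse F1 F2 s X /\ on_segment X B C0) /\
  (exists X, on_ellipse F1 F2 s X /\ on_segment X C0 A) /\
  (exists X, on_ellipse F1 F2 s X /\ on_segment X A B).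

Definition brocard_inellipse (F1 F2 : C) (s : R) (A0 B0 C0 : C) : Prop :=
  first_brocard_point F1 A0 B0 C0 /\ second_brocard_point F2 A0 B0 C0 /\
  ellipse_inscribed F1 F2 s A0 B0 C0.

Definition circumcircle (O : C) (r : R) (A0 B0 C0 : C) : Prop :=
  0 < r /\ dist A0 O = r /\ dist B0 O = r /\ dist C0 O = r.

Definition in_brocard_porism (O : C) (r : R) (F1 F2 : C) (s : R)
    (A B C0 : C) : Prop :=
  nondegenerate A B C0 /\
  dist A O = r /\ dist B O = r /\ dist C0 O = r /\
  ellipse_inscribed F1 F2 s A B C0.

(* First, for any counterclockwise triangle ABC with angle A < 120 degrees,
   the line through A and X15 of the flank triangle F_a passes through X6(ABC); this is a
   polynomial identity once X15 is written in barycentrics with weights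
   l_i^2 (|S| + sqrt 3 * d_i), S twice the signed area and d_i the dot product at vertex i.
   Second, X6 is constant on the Brocard porism.  A line l(Z) = n.Z - c is tangent to the
   Brocard inellipse iff l(Omega1) l(Omega2) = beta |n|^2 (beta the squared semi-minor axis),
   and an algebraic identity in the data of T0 turns this, for a chord PQ of the circumcircle,
   into cross(Q - P, K - P)^2 = mu^2 |PQ|^4 with K = X6(T0) and mu = S / (a^2 + b^2 + c^2).
   So the signed distances of K to the sides of any porism triangle are +-mu times the side
   lengths; as K lies inside the circumcircle the signs agree, and K has trilinears a : b : c,
   i.e. K = X6(T). *)
From Pilot Require Import Defs.
From Stdlib Require Import Reals Lra.
From Coquelicot Require Import Coquelicot.
Open Scope R_scope.

(* The Stdlib metric-space [dist] would otherwise shadow the one of [Defs]. *)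
Local Notation dist := Defs.dist.

Definition norm2 (z : C) : R := fst z ^ 2 + snd z ^ 2.

Ltac unfold_coords :=
  cbv [Cplus Cminus Copp Cmult RtoC fst snd dot cross norm2] in *.

Lemma Cmod_sqr (z : C) : Cmod z ^ 2 = norm2 z.
Proof. unfold Cmod, norm2. rewrite pow2_sqrt; nra. Qed.

Lemma dist_sqr (X Y : C) : dist X Y ^ 2 = norm2 (X - Y)%C.
Proof. apply Cmod_sqr. Qed.

Lemma Cmod_sub_sym (a b : C) : Cmod (a - b)%C = Cmod (b - a)%C.
Proof.
  rewrite <- Cmod_opp. f_equal. destruct a, b. unfold_coords. f_equal; ring.
Qed.

Lemma dist_sym (X Y : C) : dist X Y = dist Y X.
Proof. apply Cmod_sub_sym. Qed.

Lemma dist_self (X : C) : dist X X = 0.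
Proof.
  unfold dist. replace (X - X)%C with (RtoC 0) by (destruct X; unfold_coords; f_equal; ring).
  rewrite Cmod_R. apply Rabs_R0.
Qed.

Lemma norm2_sub_sym (a b : C) : norm2 (a - b)%C = norm2 (b - a)%C.
Proof. destruct a, b. unfold_coords. ring. Qed.

Lemma dot_cross_lagrange (u v : C) : dot u v ^ 2 + cross u v ^ 2 = norm2 u * norm2 v.
Proof. unfold dot, cross, norm2. ring. Qed.

Lemma norm2_pos_of_cross (u v : C) : cross u v <> 0 -> 0 < norm2 u.
Proof.
  destruct u as [x y], v. unfold_coords. intros H.
  destruct (Req_dec x 0) as [->|Hx]; [destruct (Req_dec y 0) as [->|Hy] |].
  - exfalso. apply H. ring.
  - pose proof (pow2_gt_0 y Hy). nra.
  - pose proof (pow2_gt_0 x Hx). nra.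
Qed.

Lemma Cmod_pos_of_cross (u v : C) : cross u v <> 0 -> 0 < Cmod u.
Proof.
  intros H. pose proof (norm2_pos_of_cross u v H) as Hn. rewrite <- Cmod_sqr in Hn.
  pose proof (Cmod_ge_0 u). nra.
Qed.

Lemma cross_rot (A B C0 : C) :
  cross (C0 - B)%C (A - B)%C = cross (B - A)%C (C0 - A)%C.
Proof. destruct A, B, C0. unfold_coords. ring. Qed.

Lemma cross_swap (u v : C) : cross v u = - cross u v.
Proof. unfold cross. ring. Qed.

Lemma nondegenerate_rot (A B C0 : C) : nondegenerate A B C0 -> nondegenerate B C0 A.
Proof. unfold nondegenerate. rewrite (cross_rot A B C0). exact (fun H => H). Qed.

Lemma ccw_rot (A B C0 : C) : ccw A B C0 -> ccw B C0 A.
Proof. unfold ccw. rewrite (cross_rot A B C0). exact (fun H => H). Qed.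

Lemma nondegenerate_side_norm2_pos (A B C0 : C) : nondegenerate A B C0 ->
  0 < norm2 (B - C0)%C /\ 0 < norm2 (C0 - A)%C /\ 0 < norm2 (A - B)%C.
Proof.
  unfold nondegenerate. intros H.
  split; [|split];
    [apply (norm2_pos_of_cross _ (A - C0)%C) | apply (norm2_pos_of_cross _ (B - A)%C)
    | apply (norm2_pos_of_cross _ (C0 - B)%C)];
    intro e; apply H; destruct A, B, C0; unfold_coords; lra.
Qed.

Lemma bary_fst w1 w2 w3 V1 V2 V3 : w1 + w2 + w3 <> 0 ->
  fst (bary w1 w2 w3 V1 V2 V3) = (w1 * fst V1 + w2 * fst V2 + w3 * fst V3) / (w1 + w2 + w3).
Proof. destruct V1, V2, V3; intros H; unfold bary; simpl; field; auto. Qed.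

Lemma bary_snd w1 w2 w3 V1 V2 V3 : w1 + w2 + w3 <> 0 ->
  snd (bary w1 w2 w3 V1 V2 V3) = (w1 * snd V1 + w2 * snd V2 + w3 * snd V3) / (w1 + w2 + w3).
Proof. destruct V1, V2, V3; intros H; unfold bary; simpl; field; auto. Qed.

Lemma bary_scale k w1 w2 w3 V1 V2 V3 : k <> 0 -> w1 + w2 + w3 <> 0 ->
  bary (k * w1) (k * w2) (k * w3) V1 V2 V3 = bary w1 w2 w3 V1 V2 V3.
Proof.
  intros Hk H.
  assert (H' : k * w1 + k * w2 + k * w3 <> 0).
  { replace (k * w1 + k * w2 + k * w3) with (k * (w1 + w2 + w3)) by ring.
    apply Rmult_integral_contrapositive; auto. }
  apply injective_projections; [rewrite !bary_fst | rewrite !bary_snd]; auto; field; auto.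
Qed.

Lemma bary_rot w1 w2 w3 V1 V2 V3 : bary w1 w2 w3 V1 V2 V3 = bary w2 w3 w1 V2 V3 V1.
Proof.
  unfold bary. replace (w2 + w3 + w1) with (w1 + w2 + w3) by ring. f_equal.
  destruct V1, V2, V3. unfold_coords. f_equal; ring.
Qed.

Lemma X6_norm2 (A B C0 : C) :
  X6 A B C0 = bary (norm2 (B - C0)%C) (norm2 (C0 - A)%C) (norm2 (A - B)%C) A B C0.
Proof. unfold X6. rewrite !dist_sqr. reflexivity. Qed.

Lemma X6_rot (A B C0 : C) : X6 A B C0 = X6 B C0 A.
Proof. apply bary_rot. Qed.

Lemma cos_ratio_bound (n m d c : R) : 0 < n -> 0 < m -> d ^ 2 + c ^ 2 = n ^ 2 * m ^ 2 ->
  -1 <= d / (n * m) <= 1.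
Proof.
  intros Hn Hm HL. assert (Hnm : 0 < n * m) by nra.
  split; apply (Rmult_le_reg_r (n * m)); auto; field_simplify; nra.
Qed.

Section AngleAt.
Variables V P Q : C.
Hypothesis HP : 0 < Cmod (P - V)%C.
Hypothesis HQ : 0 < Cmod (Q - V)%C.

Let nm := Cmod (P - V)%C * Cmod (Q - V)%C.

Let lagrange : dot (P - V)%C (Q - V)%C ^ 2 + cross (P - V)%C (Q - V)%C ^ 2
  = Cmod (P - V)%C ^ 2 * Cmod (Q - V)%C ^ 2.
Proof. rewrite !Cmod_sqr. apply dot_cross_lagrange. Qed.

Lemma cos_angle_at : cos (angle_at V P Q) = dot (P - V)%C (Q - V)%C / nm.
Proof. apply cos_acos, cos_ratio_bound with (cross (P - V)%C (Q - V)%C); auto. Qed.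

Lemma sin_angle_at : sin (angle_at V P Q) = Rabs (cross (P - V)%C (Q - V)%C) / nm.
Proof.
  assert (Hnm : 0 < nm) by (unfold nm; nra).
  unfold angle_at. fold nm.
  rewrite sin_acos by (apply cos_ratio_bound with (cross (P - V)%C (Q - V)%C); auto).
  rewrite <- (sqrt_Rsqr (Rabs _ / nm)) by (apply Rdiv_le_0_compat; [apply Rabs_pos | lra]).
  f_equal. unfold Rsqr.
  replace (Rabs _ / nm * (Rabs _ / nm)) with (Rabs (cross (P - V)%C (Q - V)%C) ^ 2 / nm ^ 2)
    by (field; lra).
  rewrite pow2_abs.
  assert (E : nm ^ 2 = Cmod (P - V)%C ^ 2 * Cmod (Q - V)%C ^ 2) by (unfold nm; ring).
  rewrite <- lagrange in E.
  replace (1 - _ * _) with ((nm ^ 2 - dot (P - V)%C (Q - V)%C ^ 2) / nm ^ 2) by (field; lra).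
  rewrite E. field. nra.
Qed.

Lemma sin_angle_at_add_PI3 : sin (angle_at V P Q + PI / 3) =
  (Rabs (cross (P - V)%C (Q - V)%C) + sqrt 3 * dot (P - V)%C (Q - V)%C) / (2 * nm).
Proof.
  assert (Hnm : 0 < nm) by (unfold nm; nra).
  rewrite sin_plus, sin_angle_at, cos_angle_at, sin_PI3, cos_PI3. field. lra.
Qed.

Lemma angle_at_lt_2PI3 : angle_at V P Q < 2 * PI / 3 -> 0 < nm + 2 * dot (P - V)%C (Q - V)%C.
Proof.
  intros Ha. assert (Hnm : 0 < nm) by (unfold nm; nra).
  assert (Hc : cos (2 * PI / 3) < cos (angle_at V P Q)).
  { pose proof PI_RGT_0. pose proof (acos_bound (dot (P - V)%C (Q - V)%C / nm)).
    unfold angle_at in *. apply cos_decreasing_1; unfold nm in *; lra. }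
  replace (2 * PI / 3) with (2 * (PI / 3)) in Hc by field.
  rewrite cos_angle_at, cos_2PI3 in Hc.
  apply (Rmult_lt_compat_r nm) in Hc; auto. field_simplify in Hc; lra.
Qed.

End AngleAt.

Lemma angle_at_eq_dot_cross (V P Q V' P' Q' : C) :
  0 < Cmod (P - V)%C -> 0 < Cmod (Q - V)%C -> 0 < Cmod (P' - V')%C -> 0 < Cmod (Q' - V')%C ->
  angle_at V P Q = angle_at V' P' Q' ->
  dot (P - V)%C (Q - V)%C * Rabs (cross (P' - V')%C (Q' - V')%C) =
  dot (P' - V')%C (Q' - V')%C * Rabs (cross (P - V)%C (Q - V)%C).
Proof.
  intros H1 H2 H3 H4 E.
  pose proof (f_equal cos E) as Ec. pose proof (f_equal sin E) as Es.
  rewrite !cos_angle_at in Ec by auto. rewrite !sin_angle_at in Es by auto.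
  set (nm := Cmod (P - V)%C * Cmod (Q - V)%C) in *.
  set (nm' := Cmod (P' - V')%C * Cmod (Q' - V')%C) in *.
  assert (0 < nm) by (unfold nm; nra). assert (0 < nm') by (unfold nm'; nra).
  transitivity (dot (P - V)%C (Q - V)%C / nm * (Rabs (cross (P' - V')%C (Q' - V')%C) / nm')
                * (nm * nm')); [field; lra|].
  rewrite Ec, <- Es. field. lra.
Qed.

Definition X15_weight (V1 V2 V3 : C) : R :=
  norm2 (V2 - V3)%C
  * (Rabs (cross (V2 - V1)%C (V3 - V1)%C) + sqrt 3 * dot (V2 - V1)%C (V3 - V1)%C).

Lemma sqrt3_pos : 0 < sqrt 3.
Proof. apply sqrt_lt_R0. lra. Qed.

Lemma dot_side_weighted_sum (V1 V2 V3 : C) :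
  norm2 (V2 - V3)%C * dot (V2 - V1)%C (V3 - V1)%C
  + norm2 (V3 - V1)%C * dot (V3 - V2)%C (V1 - V2)%C
  + norm2 (V1 - V2)%C * dot (V1 - V3)%C (V2 - V3)%C
  = 2 * cross (V2 - V1)%C (V3 - V1)%C ^ 2.
Proof. destruct V1, V2, V3. unfold_coords. ring. Qed.

Lemma X15_weight_sum_pos (V1 V2 V3 : C) : nondegenerate V1 V2 V3 ->
  0 < X15_weight V1 V2 V3 + X15_weight V2 V3 V1 + X15_weight V3 V1 V2.
Proof.
  intros H. pose proof (nondegenerate_side_norm2_pos _ _ _ H) as [Ha [Hb Hc]].
  unfold X15_weight. rewrite (cross_rot V2 V3 V1), (cross_rot V1 V2 V3).
  set (S := cross (V2 - V1)%C (V3 - V1)%C) in *.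
  assert (HS : 0 < Rabs S) by (apply Rabs_pos_lt; auto).
  pose proof sqrt3_pos. pose proof (dot_side_weighted_sum V1 V2 V3) as Hd. fold S in Hd.
  replace (norm2 (V2 - V3)%C * (Rabs S + sqrt 3 * dot (V2 - V1)%C (V3 - V1)%C)
    + norm2 (V3 - V1)%C * (Rabs S + sqrt 3 * dot (V3 - V2)%C (V1 - V2)%C)
    + norm2 (V1 - V2)%C * (Rabs S + sqrt 3 * dot (V1 - V3)%C (V2 - V3)%C))
    with (Rabs S * (norm2 (V2 - V3)%C + norm2 (V3 - V1)%C + norm2 (V1 - V2)%C)
          + sqrt 3 * (2 * S ^ 2)) by (rewrite <- Hd; ring).
  assert (0 < S ^ 2) by (apply pow2_gt_0; auto).
  nra.
Qed.

Lemma X15_eq_bary (V1 V2 V3 : C) : nondegenerate V1 V2 V3 ->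
  X15 V1 V2 V3
  = bary (X15_weight V1 V2 V3) (X15_weight V2 V3 V1) (X15_weight V3 V1 V2) V1 V2 V3.
Proof.
  intros H. pose proof (X15_weight_sum_pos _ _ _ H) as Hsum.
  pose proof H as H2. apply nondegenerate_rot in H2.
  pose proof H2 as H3. apply nondegenerate_rot in H3.
  unfold nondegenerate in H, H2, H3.
  assert (P21 := Cmod_pos_of_cross _ _ H).
  assert (P32 := Cmod_pos_of_cross _ _ H2).
  assert (P13 := Cmod_pos_of_cross _ _ H3).
  assert (P31 : 0 < Cmod (V3 - V1)%C) by (rewrite Cmod_sub_sym; auto).
  assert (P12 : 0 < Cmod (V1 - V2)%C) by (rewrite Cmod_sub_sym; auto).
  assert (P23 : 0 < Cmod (V2 - V3)%C) by (rewrite Cmod_sub_sym; auto).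
  unfold X15_weight in Hsum.
  rewrite <- !Cmod_sqr, (cross_rot V2 V3 V1), (cross_rot V1 V2 V3) in Hsum.
  unfold X15, X15_weight. rewrite !sin_angle_at_add_PI3 by auto.
  unfold dist. rewrite <- !Cmod_sqr.
  rewrite (Cmod_sub_sym V3 V2), (Cmod_sub_sym V2 V1), (Cmod_sub_sym V1 V3).
  rewrite (cross_rot V2 V3 V1), (cross_rot V1 V2 V3).
  set (k := 1 / (2 * Cmod (V2 - V3)%C * Cmod (V3 - V1)%C * Cmod (V1 - V2)%C)).
  assert (Hk : k <> 0).
  { unfold k. apply Rgt_not_eq, Rdiv_lt_0_compat; repeat apply Rmult_lt_0_compat; lra. }
  match goal with |- _ = bary ?a ?b ?c _ _ _ =>
    rewrite <- (bary_scale k a b c) by lra end.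
  f_equal; unfold k; field; lra.
Qed.

Lemma rho_eq : rho = (-1/2, sqrt 3 / 2).
Proof.
  unfold rho. replace (2 * PI / 3) with (2 * (PI / 3)) by field.
  rewrite cos_2PI3, sin_2PI3. reflexivity.
Qed.

Lemma Cinv_rho_eq : (/ rho)%C = (-1/2, - (sqrt 3 / 2)).
Proof.
  rewrite rho_eq. unfold Cinv. cbn [fst snd].
  replace ((-1/2) ^ 2 + (sqrt 3 / 2) ^ 2) with 1.
  - f_equal; field.
  - replace ((sqrt 3 / 2) ^ 2) with (sqrt 3 ^ 2 / 4) by field. rewrite pow2_sqrt; lra.
Qed.

Lemma collinear_bary (A V2 V3 B C0 : C) w1 w2 w3 u1 u2 u3 :
  w1 + w2 + w3 <> 0 -> u1 + u2 + u3 <> 0 ->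
  cross (RtoC w2 * (V2 - A) + RtoC w3 * (V3 - A))%C
        (RtoC u2 * (B - A) + RtoC u3 * (C0 - A))%C = 0 ->
  collinear A (bary w1 w2 w3 A V2 V3) (bary u1 u2 u3 A B C0).
Proof.
  intros Hw Hu H. unfold collinear, cross.
  unfold Cminus, Cplus, Copp. cbn [fst snd].
  rewrite !bary_fst, !bary_snd by auto.
  replace 0 with (cross (RtoC w2 * (V2 - A) + RtoC w3 * (V3 - A))%C
                         (RtoC u2 * (B - A) + RtoC u3 * (C0 - A))%C
                  / ((w1 + w2 + w3) * (u1 + u2 + u3))) by (rewrite H; field; auto).
  destruct A, V2, V3, B, C0. unfold_coords. field. auto.
Qed.

Lemma cross_add_sqrt3_dot_pos (S d nm : R) :
  0 < S -> 0 < nm + 2 * d -> d ^ 2 + S ^ 2 = nm ^ 2 -> 0 < S + sqrt 3 * d.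
Proof.
  intros HS Hd HL. pose proof sqrt3_pos. pose proof (pow2_sqrt 3 ltac:(lra)).
  destruct (Rle_or_lt 0 d); [nra|].
  assert ((sqrt 3 * d) ^ 2 < S ^ 2) by nra.
  nra.
Qed.

Lemma flank_a_collinear_X6 (A B C0 : C) : ccw A B C0 -> angle_at A B C0 < 2 * PI / 3 ->
  collinear A (X15t (flank_a A B C0)) (X6 A B C0).
Proof.
  intros Hccw Hang. unfold ccw in Hccw.
  set (S := cross (B - A)%C (C0 - A)%C) in *.
  set (d := dot (B - A)%C (C0 - A)%C).
  assert (HB : 0 < Cmod (B - A)%C) by (apply (Cmod_pos_of_cross _ (C0 - A)%C); fold S; lra).
  assert (HC : 0 < Cmod (C0 - A)%C).
  { apply (Cmod_pos_of_cross _ (B - A)%C). rewrite cross_swap. fold S. lra. }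
  assert (Hpos : 0 < S + sqrt 3 * d).
  { apply (cross_add_sqrt3_dot_pos _ _ (Cmod (B - A)%C * Cmod (C0 - A)%C)); auto.
    - apply angle_at_lt_2PI3; auto.
    - rewrite Rpow_mult_distr, !Cmod_sqr, <- dot_cross_lagrange. unfold d, S. ring. }
  unfold flank_a, X15t. rewrite Cinv_rho_eq, rho_eq.
  set (V2 := (A + ((-1/2)%R, (sqrt 3 / 2)%R) * (C0 - A))%C).
  set (V3 := (A + ((-1/2)%R, (- (sqrt 3 / 2))%R) * (B - A))%C).
  assert (Hcr : cross (V2 - A)%C (V3 - A)%C = (S + sqrt 3 * d) / 2).
  { transitivity ((1 - sqrt 3 ^ 2) / 4 * (- S) + sqrt 3 / 2 * d).
    - unfold V2, V3, S, d. destruct A, B, C0. unfold_coords. field.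
    - rewrite pow2_sqrt by lra. field. }
  assert (Hnd : nondegenerate A V2 V3) by (unfold nondegenerate; lra).
  pose proof (X15_weight_sum_pos _ _ _ Hnd) as Hw.
  pose proof (nondegenerate_side_norm2_pos A B C0 ltac:(unfold nondegenerate; fold S; lra))
    as [Ha [Hb Hc]].
  rewrite X15_eq_bary, X6_norm2 by auto.
  apply collinear_bary; [lra | lra |].
  unfold X15_weight. rewrite (cross_rot V2 V3 A), (cross_rot A V2 V3), Rabs_right by lra.
  (* Keep [cross (V2 - A) (V3 - A)] unexpanded: the identity then holds with [sqrt 3] generic. *)
  unfold V2, V3, d, S. destruct A as [a1 a2], B as [b1 b2], C0 as [c1 c2]. unfold_coords. field.
Qed.

(* The classical barycentrics (1/b^2 : 1/c^2 : 1/a^2), multiplied by a^2 b^2 c^2. *)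
Definition first_brocard (A B C0 : C) : C :=
  bary (norm2 (B - C0)%C * norm2 (A - B)%C) (norm2 (B - C0)%C * norm2 (C0 - A)%C)
       (norm2 (C0 - A)%C * norm2 (A - B)%C) A B C0.

Lemma cross_in_triangle (A B C0 : C) (u v w : R) : u + v + w = 1 ->
  let F := (RtoC u * A + RtoC v * B + RtoC w * C0)%C in
  let S := cross (B - A)%C (C0 - A)%C in
  cross (F - A)%C (B - A)%C = - w * S /\ cross (F - B)%C (C0 - B)%C = - u * S /\
  cross (F - C0)%C (A - C0)%C = - v * S.
Proof.
  intros Hs F S. unfold F, S. replace u with (1 - v - w) by lra.
  destruct A, B, C0. unfold_coords. repeat split; ring.
Qed.

Lemma brocard_dot_relations (d1 d2 d3 u v w L : R) : 0 < u ->
  u + v + w = 1 -> d1 + d2 + d3 = L -> d1 * u = d2 * w -> d2 * v = d3 * u ->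
  d1 = w * L /\ d2 = u * L.
Proof.
  intros Hu Hs Hd R1 R2.
  assert (D2 : d2 = u * L).
  { assert (E : u * (d1 + d2 + d3) = d2 * (u + v + w)).
    { replace (u * (d1 + d2 + d3)) with (d1 * u + d2 * u + d3 * u) by ring.
      rewrite R1, <- R2. ring. }
    rewrite Hs in E. rewrite <- Hd. lra. }
  split; auto. apply (Rmult_eq_reg_r u); [|lra]. rewrite R1, D2. ring.
Qed.

Lemma bary_of_weight_ratios (u v w la lb lc : R) (A B C0 : C) :
  0 < la -> 0 < lb -> 0 < lc -> u + v + w = 1 -> w * la = u * lb -> v * lc = w * la ->
  (RtoC u * A + RtoC v * B + RtoC w * C0)%C = bary (la * lc) (la * lb) (lb * lc) A B C0.
Proof.
  intros Ha Hb Hc Hs E1 E2.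
  set (W := la * lc + la * lb + lb * lc).
  assert (HW : 0 < W) by (unfold W; nra).
  assert (Hu : la * lc = W * u).
  { transitivity (la * lc * (u + v + w)); [rewrite Hs; ring|].
    transitivity (u * la * lc + (v * lc) * la + (w * la) * lc); [ring|].
    rewrite E2, E1. unfold W. ring. }
  assert (Hv : la * lb = W * v).
  { transitivity (la * lb * (u + v + w)); [rewrite Hs; ring|].
    transitivity ((u * lb) * la + v * la * lb + (w * la) * lb); [ring|].
    rewrite <- E1, <- E2. unfold W. ring. }
  assert (Hw : lb * lc = W * w).
  { transitivity (lb * lc * (u + v + w)); [rewrite Hs; ring|].
    transitivity ((u * lb) * lc + (v * lc) * lb + w * lb * lc); [ring|].
    rewrite <- E1, E2. unfold W. ring. }
  rewrite Hu, Hv, Hw, bary_scale by lra.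
  apply injective_projections; [rewrite bary_fst | rewrite bary_snd]; try lra;
    rewrite Hs; destruct A, B, C0; unfold_coords; field.
Qed.

Lemma first_brocard_point_eq (F A B C0 : C) : nondegenerate A B C0 ->
  first_brocard_point F A B C0 -> F = first_brocard A B C0.
Proof.
  intros Hnd [[u [v [w [Hu [Hv [Hw [Hs HF]]]]]]] [E1 E2]].
  pose proof (nondegenerate_side_norm2_pos _ _ _ Hnd) as [Ha [Hb Hc]].
  unfold nondegenerate in Hnd. set (S := cross (B - A)%C (C0 - A)%C) in *.
  destruct (cross_in_triangle A B C0 u v w Hs) as [X1 [X2 X3]]. rewrite <- HF in X1, X2, X3.
  assert (nz : forall a, 0 < a -> - a * S <> 0)
    by (intros; apply Rmult_integral_contrapositive; split; lra).
  assert (N : forall P Q Z, cross (P - Q)%C (Z - Q)%C <> 0 ->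
              0 < Cmod (P - Q)%C /\ 0 < Cmod (Z - Q)%C).
  { intros P Q Z H. split; [apply (Cmod_pos_of_cross _ _ H)|].
    apply (Cmod_pos_of_cross _ (P - Q)%C). rewrite cross_swap. lra. }
  destruct (N F A B) as [N1 N2]; [rewrite X1; auto|].
  destruct (N F B C0) as [N3 N4]; [rewrite X2; auto|].
  destruct (N F C0 A) as [N5 N6]; [rewrite X3; auto|].
  (* Equal Brocard angles have equal cotangents dot / |cross|, and |cross| is w|S|, u|S|, v|S|. *)
  pose proof (angle_at_eq_dot_cross A F B B F C0 N1 N2 N3 N4 E1) as R1.
  pose proof (angle_at_eq_dot_cross B F C0 C0 F A N3 N4 N5 N6 E2) as R2.
  rewrite X1, X2 in R1. rewrite X2, X3 in R2.
  assert (Ru : Rabs u = u) by (apply Rabs_right; lra).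
  assert (Rv : Rabs v = v) by (apply Rabs_right; lra).
  assert (Rw : Rabs w = w) by (apply Rabs_right; lra).
  rewrite !Rabs_mult, !Rabs_Ropp, Ru, Rw in R1. rewrite !Rabs_mult, !Rabs_Ropp, Ru, Rv in R2.
  fold S in R1, R2.
  assert (HS : 0 < Rabs S) by (apply Rabs_pos_lt; auto).
  set (la := norm2 (B - C0)%C) in *. set (lb := norm2 (C0 - A)%C) in *.
  set (lc := norm2 (A - B)%C) in *.
  destruct (brocard_dot_relations (dot (F - A)%C (B - A)%C) (dot (F - B)%C (C0 - B)%C)
              (dot (F - C0)%C (A - C0)%C) u v w ((la + lb + lc) / 2)) as [D1 D2]; auto.
  - unfold la, lb, lc. destruct A, B, C0, F. unfold_coords. field.
  - apply (Rmult_eq_reg_r (Rabs S)); lra.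
  - apply (Rmult_eq_reg_r (Rabs S)); lra.
  - rewrite HF. apply bary_of_weight_ratios; auto.
    + change (w * la = u * lb).
      enough (I : w * la - u * lb = dot (F - B)%C (C0 - B)%C - u * ((la + lb + lc) / 2)) by lra.
      rewrite HF. unfold la, lb, lc. replace v with (1 - u - w) by lra.
      destruct A, B, C0. unfold_coords. field.
    + change (v * lc = w * la).
      enough (I : v * lc - w * la = dot (F - A)%C (B - A)%C - w * ((la + lb + lc) / 2)) by lra.
      rewrite HF. unfold la, lb, lc. replace u with (1 - v - w) by lra.
      destruct A, B, C0. unfold_coords. field.
Qed.

Lemma second_brocard_point_eq (F A B C0 : C) : nondegenerate A B C0 ->
  second_brocard_point F A B C0 -> F = first_brocard A C0 B.
Proof.
  intros Hnd [[u [v [w [Hu [Hv [Hw [Hs HF]]]]]]] [E1 E2]].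
  apply first_brocard_point_eq.
  - unfold nondegenerate in *. rewrite cross_swap. lra.
  - split; [|split; congruence].
    exists u, w, v. repeat split; try lra. subst F. destruct A, B, C0. unfold_coords. f_equal; ring.
Qed.

Definition circumcenter (A B C0 : C) : C :=
  let S := cross (B - A)%C (C0 - A)%C in
  ((norm2 A * (snd B - snd C0) + norm2 B * (snd C0 - snd A) + norm2 C0 * (snd A - snd B))
     / (2 * S),
   (norm2 A * (fst C0 - fst B) + norm2 B * (fst A - fst C0) + norm2 C0 * (fst B - fst A))
     / (2 * S)).

Lemma circumcenter_eq (A B C0 O : C) : nondegenerate A B C0 ->
  norm2 (B - O)%C = norm2 (A - O)%C -> norm2 (C0 - O)%C = norm2 (A - O)%C ->
  O = circumcenter A B C0.
Proof.
  unfold nondegenerate, circumcenter.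
  destruct A as [a1 a2], B as [b1 b2], C0 as [c1 c2], O as [x y]. unfold_coords.
  set (S := (b1 + - a1) * (c2 + - a2) - (b2 + - a2) * (c1 + - a1)).
  intros HS E1 E2. f_equal.
  - apply (Rmult_eq_reg_r (2 * S)); [|lra].
    unfold Rdiv. rewrite Rmult_assoc, Rinv_l, Rmult_1_r by lra.
    enough (I : x * (2 * S) - ((a1 ^ 2 + a2 ^ 2) * (b2 - c2) + (b1 ^ 2 + b2 ^ 2) * (c2 - a2)
                              + (c1 ^ 2 + c2 ^ 2) * (a2 - b2))
      = (b2 - a2) * ((c1 + - x) ^ 2 + (c2 + - y) ^ 2 - ((a1 + - x) ^ 2 + (a2 + - y) ^ 2))
        - (c2 - a2) * ((b1 + - x) ^ 2 + (b2 + - y) ^ 2 - ((a1 + - x) ^ 2 + (a2 + - y) ^ 2)))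
      by (rewrite E1, E2 in I; lra).
    unfold S. ring.
  - apply (Rmult_eq_reg_r (2 * S)); [|lra].
    unfold Rdiv. rewrite Rmult_assoc, Rinv_l, Rmult_1_r by lra.
    enough (I : y * (2 * S) - ((a1 ^ 2 + a2 ^ 2) * (c1 - b1) + (b1 ^ 2 + b2 ^ 2) * (a1 - c1)
                              + (c1 ^ 2 + c2 ^ 2) * (b1 - a1))
      = (c1 - a1) * ((b1 + - x) ^ 2 + (b2 + - y) ^ 2 - ((a1 + - x) ^ 2 + (a2 + - y) ^ 2))
        - (b1 - a1) * ((c1 + - x) ^ 2 + (c2 + - y) ^ 2 - ((a1 + - x) ^ 2 + (a2 + - y) ^ 2)))
      by (rewrite E1, E2 in I; lra).
    unfold S. ring.
Qed.

Lemma dist_on_line_coords (Z m F : C) (t : R) :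
  dist (Z + RtoC t * m)%C F
  = sqrt ((fst Z - fst F + t * fst m) ^ 2 + (snd Z - snd F + t * snd m) ^ 2).
Proof. unfold dist, Cmod. f_equal. destruct Z, m, F. unfold_coords. ring. Qed.

Lemma continuous_dist_on_line (Z m F : C) (t : R) :
  continuous (fun t => dist (Z + RtoC t * m)%C F) t.
Proof.
  apply (continuous_ext (fun t =>
    sqrt ((fst Z - fst F + t * fst m) ^ 2 + (snd Z - snd F + t * snd m) ^ 2))).
  { intros x. symmetry. apply dist_on_line_coords. }
  apply (continuous_sqrt_comp
           (fun t => (fst Z - fst F + t * fst m) ^ 2 + (snd Z - snd F + t * snd m) ^ 2)).
  apply (@ex_derive_continuous R_AbsRing R_NormedModule). auto_derive. auto.
Qed.

Lemma ellipse_meets_ray (F1 F2 Z m : C) (s : R) : 0 < Cmod m ->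
  dist Z F1 + dist Z F2 < s -> exists t, 0 < t /\ on_ellipse F1 F2 s (Z + RtoC t * m)%C.
Proof.
  intros Hm HZ.
  set (g := fun t => dist (Z + RtoC t * m)%C F1 + dist (Z + RtoC t * m)%C F2 - s).
  assert (Hg : continuity g).
  { intros t. apply continuity_pt_filterlim. unfold g.
    apply (continuous_minus (fun t => _ + _) (fun _ => s)); [|apply continuous_const].
    apply (continuous_plus (fun t => dist _ F1) (fun t => dist _ F2));
      apply continuous_dist_on_line. }
  assert (Hg0 : g 0 < 0).
  { unfold g. replace (Z + RtoC 0 * m)%C with Z; [lra|].
    destruct Z, m. unfold_coords. f_equal; ring. }
  set (T := (s + dist F1 Z + 1) / Cmod m).
  pose proof (Cmod_ge_0 (Z - F1)%C). pose proof (Cmod_ge_0 (Z - F2)%C).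
  pose proof (Cmod_ge_0 (F1 - Z)%C).
  assert (HT : 0 < T) by (unfold T, dist in *; apply Rdiv_lt_0_compat; lra).
  assert (HgT : 0 < g T).
  { assert (Htri := Cmod_triangle ((Z + RtoC T * m) - F1)%C (F1 - Z)%C).
    replace ((Z + RtoC T * m) - F1 + (F1 - Z))%C with (RtoC T * m)%C in Htri
      by (destruct Z, m, F1; unfold_coords; f_equal; ring).
    rewrite Cmod_mult, Cmod_R, Rabs_right in Htri by lra.
    replace (T * Cmod m) with (s + dist F1 Z + 1) in Htri by (unfold T; field; lra).
    unfold g, dist in *. pose proof (Cmod_ge_0 (Z + RtoC T * m - F2)%C). lra. }
  destruct (IVT g 0 T Hg HT Hg0 HgT) as [t [[Ht0 HtT] Ht]].
  exists t. split.
  - destruct Ht0 as [|<-]; [auto | lra].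
  - unfold on_ellipse. unfold g in Ht. lra.
Qed.

Lemma dist_triangle (X Y Z : C) : dist X Z <= dist X Y + dist Y Z.
Proof.
  unfold dist. replace (X - Z)%C with ((X - Y) + (Y - Z))%C
    by (destruct X, Y, Z; unfold_coords; f_equal; ring).
  apply Cmod_triangle.
Qed.

Definition reflect_line (P q F : C) : C :=
  (F + RtoC (2 * cross q (F - P)%C / norm2 q) * (snd q, (- fst q)%R))%C.

Lemma dist_reflect_line (P q F Y : C) : 0 < norm2 q -> cross q (Y - P)%C = 0 ->
  dist Y (reflect_line P q F) = dist Y F.
Proof.
  intros Hq HY. unfold dist, Cmod, reflect_line. f_equal.
  revert HY Hq. destruct P, q, F, Y. unfold_coords. intros HY Hq.
  transitivity ((r5 + - r3) ^ 2 + (r6 + - r4) ^ 2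
                + 4 * ((r1 * (r4 + - r0) - r2 * (r3 + - r)) / (r1 ^ 2 + r2 ^ 2))
                  * (r1 * (r6 + - r0) - r2 * (r5 + - r))); [field; lra|].
  rewrite HY. ring.
Qed.

Lemma cross_reflect_line (P q F : C) : 0 < norm2 q ->
  cross q (reflect_line P q F - P)%C = - cross q (F - P)%C.
Proof.
  intros Hq. unfold reflect_line. revert Hq. destruct P, q, F. unfold_coords. intros. field. lra.
Qed.

Lemma norm2_reflect_line_sub (P q F1 F2 : C) : 0 < norm2 q ->
  norm2 (reflect_line P q F2 - F1)%C
  = norm2 (F2 - F1)%C + 4 * cross q (F1 - P)%C * cross q (F2 - P)%C / norm2 q.
Proof.
  intros Hq. unfold reflect_line. revert Hq. destruct P, q, F1, F2. unfold_coords. intros.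
  field. lra.
Qed.

Lemma segment_meets_line (P q F G : C) : cross q (F - P)%C * cross q (G - P)%C < 0 ->
  exists Y, cross q (Y - P)%C = 0 /\ dist Y F + dist Y G = dist F G.
Proof.
  intros Hopp.
  set (cF := cross q (F - P)%C) in *. set (cG := cross q (G - P)%C) in *.
  assert (Ht : 0 < cF / (cF - cG) < 1).
  { assert (Hfrac : forall a b, 0 < a -> 0 < b -> 0 < a / (a + b) < 1).
    { intros a b Ha Hb. split; [apply Rdiv_lt_0_compat; lra|].
      apply (Rmult_lt_reg_r (a + b)); [lra|]. unfold Rdiv. rewrite Rmult_assoc, Rinv_l; lra. }
    assert (cF <> 0) by (intro e; rewrite e in Hopp; lra).
    destruct (Rlt_or_le 0 cF).
    - replace (cF - cG) with (cF + - cG) by ring. apply Hfrac; nra.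
    - assert (cF < 0) by lra.
      replace (cF / (cF - cG)) with ((- cF) / (- cF + cG)) by (field; split; intro; nra).
      apply Hfrac; nra. }
  set (t := cF / (cF - cG)) in *.
  exists (F + RtoC t * (G - F))%C. split.
  - transitivity (cF + t * (cG - cF)).
    + unfold cF, cG. destruct P, q, F, G. unfold_coords. ring.
    + unfold t. field. intros e. nra.
  - unfold dist.
    replace (F + RtoC t * (G - F) - F)%C with (RtoC t * (G - F))%C
      by (destruct F, G; unfold_coords; f_equal; ring).
    replace (F + RtoC t * (G - F) - G)%C with (RtoC (1 - t) * (F - G))%C
      by (destruct F, G; unfold_coords; f_equal; ring).
    rewrite !Cmod_mult, !Cmod_R, !Rabs_right, (Cmod_sub_sym G F) by lra. ring.
Qed.

Section TangentLine.
Variables F1 F2 P Q : C.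
Variables s sg : R.
Hypothesis Hsg : sg <> 0.
Hypothesis Hq : 0 < norm2 (Q - P)%C.
Hypothesis Hsupport : forall X, on_ellipse F1 F2 s X -> 0 <= sg * cross (Q - P)%C (X - P)%C.

Lemma inside_ellipse_strict_side (Z : C) : dist Z F1 + dist Z F2 < s ->
  0 < sg * cross (Q - P)%C (Z - P)%C.
Proof.
  intros HZ. apply Rnot_le_lt. intros Hle.
  set (m := (sg * snd (Q - P)%C, - (sg * fst (Q - P)%C)) : C).
  assert (Hm : 0 < Cmod m).
  { apply (Cmod_pos_of_cross _ (Q - P)%C).
    replace (cross m (Q - P)%C) with (sg * norm2 (Q - P)%C)
      by (unfold m, cross, norm2; cbn [fst snd]; ring).
    apply Rmult_integral_contrapositive. split; lra. }
  destruct (ellipse_meets_ray F1 F2 Z m s Hm HZ) as [t [Ht HY]].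
  specialize (Hsupport _ HY).
  replace (cross (Q - P)%C (Z + RtoC t * m - P)%C)
    with (cross (Q - P)%C (Z - P)%C - t * sg * norm2 (Q - P)%C) in Hsupport
    by (unfold m; destruct Z, P, Q; unfold_coords; ring).
  assert (0 < sg ^ 2) by (apply pow2_gt_0; auto).
  assert (0 < t * (sg ^ 2 * norm2 (Q - P)%C))
    by (apply Rmult_lt_0_compat; [|apply Rmult_lt_0_compat]; lra).
  nra.
Qed.

Lemma line_outside_ellipse (Y : C) : cross (Q - P)%C (Y - P)%C = 0 ->
  s <= dist Y F1 + dist Y F2.
Proof.
  intros HY. apply Rnot_lt_le. intros Hlt.
  pose proof (inside_ellipse_strict_side Y Hlt). rewrite HY in H. lra.
Qed.

Lemma foci_strict_side : dist F1 F2 < s ->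
  0 < sg * cross (Q - P)%C (F1 - P)%C /\ 0 < sg * cross (Q - P)%C (F2 - P)%C.
Proof.
  intros Hd. split; apply inside_ellipse_strict_side; rewrite dist_self.
  - lra.
  - rewrite dist_sym. lra.
Qed.

Hypothesis Htouch : exists X, on_ellipse F1 F2 s X /\ cross (Q - P)%C (X - P)%C = 0.

Lemma tangent_line_foci_cross : dist F1 F2 < s ->
  4 * (cross (Q - P)%C (F1 - P)%C * cross (Q - P)%C (F2 - P)%C)
  = (s ^ 2 - dist F1 F2 ^ 2) * norm2 (Q - P)%C.
Proof.
  intros Hd. destruct Htouch as [X0 [HX0 HX0l]].
  destruct (foci_strict_side Hd) as [H1 H2].
  (* Reflection property: the mirror image F2' of F2 in the tangent satisfies |F1 F2'| = s. *)
  set (F2' := reflect_line P (Q - P)%C F2).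
  assert (Hopp : cross (Q - P)%C (F1 - P)%C * cross (Q - P)%C (F2' - P)%C < 0).
  { unfold F2'. rewrite cross_reflect_line by auto.
    assert (0 < (sg * cross (Q - P)%C (F1 - P)%C) * (sg * cross (Q - P)%C (F2 - P)%C)) by nra.
    assert (0 < sg ^ 2) by (apply pow2_gt_0; auto). nra. }
  destruct (segment_meets_line P (Q - P)%C F1 F2' Hopp) as [Y [HY HYd]].
  assert (Hge : s <= dist F1 F2').
  { rewrite <- HYd. unfold F2'. rewrite dist_reflect_line by auto.
    apply line_outside_ellipse; auto. }
  assert (Hle : dist F1 F2' <= s).
  { unfold on_ellipse in HX0. unfold F2'.
    rewrite <- (dist_reflect_line P (Q - P)%C F2 X0) in HX0 by auto.
    pose proof (dist_triangle F1 X0 (reflect_line P (Q - P)%C F2)) as Htri.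
    rewrite (dist_sym F1 X0) in Htri. lra. }
  assert (Heq : norm2 (F2' - F1)%C = s ^ 2) by (rewrite <- dist_sqr, dist_sym; f_equal; lra).
  unfold F2' in Heq. rewrite norm2_reflect_line_sub in Heq by auto.
  rewrite dist_sqr, norm2_sub_sym, <- Heq. field. lra.
Qed.

End TangentLine.

Definition symmedian_ratio (A B C0 : C) : R :=
  cross (B - A)%C (C0 - A)%C / (norm2 (B - C0)%C + norm2 (C0 - A)%C + norm2 (A - B)%C).

(* A linear relation between three line conics: the lines through X6, the tangents of the
   circumcircle, and the tangents of the Brocard inellipse (foci F1, F2, squared semi-minor
   axis beta, read off the side BC). *)
Lemma brocard_tangential_identity (A B C0 : C) (n1 n2 c : R) : nondegenerate A B C0 ->
  let lin (Z : C) := n1 * fst Z + n2 * snd Z - c in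
  let F1 := first_brocard A B C0 in
  let F2 := first_brocard A C0 B in
  let O := circumcenter A B C0 in
  let mu := symmedian_ratio A B C0 in
  let beta := cross (C0 - B)%C (F1 - B)%C * cross (C0 - B)%C (F2 - B)%C / norm2 (C0 - B)%C in
  lin (X6 A B C0) ^ 2 - 4 * mu ^ 2 * (norm2 (A - O)%C * (n1 ^ 2 + n2 ^ 2) - lin O ^ 2)
  = (1 + 4 * mu ^ 2) * (lin F1 * lin F2 - beta * (n1 ^ 2 + n2 ^ 2)).
Proof.
  intros Hnd lin F1 F2 O mu beta.
  pose proof (nondegenerate_side_norm2_pos _ _ _ Hnd) as [Ha [Hb Hc]].
  unfold beta, mu, lin, F1, F2, O, symmedian_ratio, circumcenter, first_brocard.
  rewrite X6_norm2, (norm2_sub_sym C0 B), (norm2_sub_sym A C0), (norm2_sub_sym B A).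
  set (la := norm2 (B - C0)%C) in *. set (lb := norm2 (C0 - A)%C) in *.
  set (lc := norm2 (A - B)%C) in *.
  unfold cross, Cminus, Cplus, Copp. cbn [fst snd].
  assert (0 < la * lb) by nra. assert (0 < la * lc) by nra. assert (0 < lb * lc) by nra.
  rewrite !bary_fst, !bary_snd by nra.
  unfold nondegenerate in Hnd. unfold la, lb, lc in *. revert Ha Hb Hc Hnd.
  destruct A as [a1 a2], B as [b1 b2], C0 as [c1 c2]. unfold_coords. intros.
  apply Rminus_diag_uniq. field. repeat split; lra.
Qed.

Definition foci_cross_product (F1 F2 P Q : C) : R :=
  cross (Q - P)%C (F1 - P)%C * cross (Q - P)%C (F2 - P)%C.

Lemma closed_triangle_side_sign (X A B C0 : C) : in_closed_triangle X A B C0 ->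
  0 <= cross (B - A)%C (C0 - A)%C * cross (C0 - B)%C (X - B)%C.
Proof.
  intros [u [v [w [Hu [Hv [Hw [Hs HX]]]]]]].
  replace (cross (C0 - B)%C (X - B)%C) with (u * cross (B - A)%C (C0 - A)%C).
  - nra.
  - subst X. replace w with (1 - u - v) by lra. destruct A, B, C0. unfold_coords. ring.
Qed.

Lemma on_segment_cross (X P Q : C) : on_segment X P Q -> cross (Q - P)%C (X - P)%C = 0.
Proof. intros [t [Ht HX]]. subst X. destruct P, Q. unfold_coords. ring. Qed.

Lemma inscribed_foci_cross_product (F1 F2 : C) (s : R) (A B C0 : C) :
  nondegenerate A B C0 -> ellipse_inscribed F1 F2 s A B C0 ->
  4 * foci_cross_product F1 F2 B C0 = (s ^ 2 - dist F1 F2 ^ 2) * norm2 (C0 - B)%C.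
Proof.
  intros Hnd [Hd [Hin [[X [HX HXs]] _]]].
  destruct (nondegenerate_side_norm2_pos _ _ _ Hnd) as [Ha _].
  apply (tangent_line_foci_cross F1 F2 B C0 s (cross (B - A)%C (C0 - A)%C)); auto.
  - rewrite norm2_sub_sym. auto.
  - intros Y HY. apply closed_triangle_side_sign. auto.
  - exists X. split; auto. apply on_segment_cross. auto.
Qed.

Lemma ellipse_inscribed_rot (F1 F2 : C) (s : R) (A B C0 : C) :
  ellipse_inscribed F1 F2 s A B C0 -> ellipse_inscribed F1 F2 s B C0 A.
Proof.
  intros [Hd [Hin [H1 [H2 H3]]]]. repeat split; auto.
  intros X HX. destruct (Hin X HX) as [u [v [w [Hu [Hv [Hw [Hs E]]]]]]].
  exists v, w, u. repeat split; try lra.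
  subst X. destruct A, B, C0. unfold_coords. f_equal; ring.
Qed.

Lemma chord_cross_sqr (P Q O : C) (r2 : R) : norm2 (P - O)%C = r2 -> norm2 (Q - O)%C = r2 ->
  r2 * norm2 (Q - P)%C - cross (Q - P)%C (O - P)%C ^ 2 = norm2 (Q - P)%C ^ 2 / 4.
Proof.
  intros HP HQ.
  enough (I : r2 * norm2 (Q - P)%C - cross (Q - P)%C (O - P)%C ^ 2 - norm2 (Q - P)%C ^ 2 / 4
    = (norm2 (P - O)%C - norm2 (Q - O)%C) ^ 2 / 4
      + (r2 - (norm2 (P - O)%C + norm2 (Q - O)%C) / 2) * norm2 (Q - P)%C)
    by (rewrite HP, HQ in I; lra).
  destruct P, Q, O. unfold_coords. field.
Qed.

Lemma X6_side_cross_sqr (A0 B0 C0 P Q : C) : nondegenerate A0 B0 C0 ->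
  let F1 := first_brocard A0 B0 C0 in
  let F2 := first_brocard A0 C0 B0 in
  let O := circumcenter A0 B0 C0 in
  norm2 (P - O)%C = norm2 (A0 - O)%C -> norm2 (Q - O)%C = norm2 (A0 - O)%C ->
  foci_cross_product F1 F2 P Q * norm2 (C0 - B0)%C
  = foci_cross_product F1 F2 B0 C0 * norm2 (Q - P)%C ->
  cross (Q - P)%C (X6 A0 B0 C0 - P)%C ^ 2 = symmedian_ratio A0 B0 C0 ^ 2 * norm2 (Q - P)%C ^ 2.
Proof.
  intros Hnd F1 F2 O HP HQ Ht.
  destruct (nondegenerate_side_norm2_pos _ _ _ Hnd) as [Ha _].
  pose proof (brocard_tangential_identity A0 B0 C0 (- snd (Q - P)%C) (fst (Q - P)%C)
    (- snd (Q - P)%C * fst P + fst (Q - P)%C * snd P) Hnd) as Hid.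
  cbv beta zeta in Hid. fold F1 F2 O in Hid.
  assert (L : forall Z : C, - snd (Q - P)%C * fst Z + fst (Q - P)%C * snd Z
    - (- snd (Q - P)%C * fst P + fst (Q - P)%C * snd P) = cross (Q - P)%C (Z - P)%C).
  { intros Z. destruct Z, P, Q. unfold_coords. ring. }
  rewrite !L in Hid.
  replace ((- snd (Q - P)%C) ^ 2 + fst (Q - P)%C ^ 2) with (norm2 (Q - P)%C) in Hid
    by (unfold norm2; ring).
  pose proof (chord_cross_sqr P Q O _ HP HQ) as Hchord.
  assert (E : cross (Q - P)%C (F1 - P)%C * cross (Q - P)%C (F2 - P)%C
              = foci_cross_product F1 F2 B0 C0 / norm2 (C0 - B0)%C * norm2 (Q - P)%C).
  { rewrite norm2_sub_sym in Ha.
    apply (Rmult_eq_reg_r (norm2 (C0 - B0)%C)); [|apply Rgt_not_eq; lra].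
    unfold foci_cross_product in *. rewrite Ht. field. apply Rgt_not_eq. lra. }
  rewrite E, Hchord in Hid. unfold foci_cross_product in Hid.
  lra.
Qed.

Lemma norm2_bary_sub (w1 w2 w3 : R) (A B C1 O : C) : w1 + w2 + w3 <> 0 ->
  norm2 (bary w1 w2 w3 A B C1 - O)%C * (w1 + w2 + w3) ^ 2
  = (w1 + w2 + w3) * (w1 * norm2 (A - O)%C + w2 * norm2 (B - O)%C + w3 * norm2 (C1 - O)%C)
    - (w1 * w2 * norm2 (A - B)%C + w2 * w3 * norm2 (B - C1)%C + w3 * w1 * norm2 (C1 - A)%C).
Proof.
  intros Hw. unfold norm2 at 1. unfold Cminus, Cplus, Copp. cbn [fst snd].
  rewrite bary_fst, bary_snd by auto. destruct A, B, C1, O. unfold_coords. field. auto.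
Qed.

Lemma X6_inside_circumcircle (A B C1 O : C) (r2 : R) : nondegenerate A B C1 ->
  norm2 (A - O)%C = r2 -> norm2 (B - O)%C = r2 -> norm2 (C1 - O)%C = r2 ->
  norm2 (X6 A B C1 - O)%C < r2.
Proof.
  intros Hnd HA HB HC.
  destruct (nondegenerate_side_norm2_pos _ _ _ Hnd) as [Pa [Pb Pc]].
  set (W := norm2 (B - C1)%C + norm2 (C1 - A)%C + norm2 (A - B)%C).
  assert (0 < W ^ 2) by (apply pow2_gt_0; unfold W; lra).
  assert (0 < norm2 (B - C1)%C * norm2 (C1 - A)%C * norm2 (A - B)%C)
    by (repeat apply Rmult_lt_0_compat; lra).
  pose proof (norm2_bary_sub (norm2 (B - C1)%C) (norm2 (C1 - A)%C) (norm2 (A - B)%C) A B C1 O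
                ltac:(unfold W in *; lra)) as E.
  rewrite <- X6_norm2, HA, HB, HC in E. fold W in E.
  apply (Rmult_lt_reg_r (W ^ 2)); auto. rewrite E. unfold W. lra.
Qed.

Lemma bary_of_cross (A B C1 K : C) : nondegenerate A B C1 ->
  K = bary (cross (C1 - B)%C (K - B)%C) (cross (A - C1)%C (K - C1)%C) (cross (B - A)%C (K - A)%C)
           A B C1.
Proof.
  unfold nondegenerate. intros Hnd.
  assert (Hsum : cross (C1 - B)%C (K - B)%C + cross (A - C1)%C (K - C1)%C
                 + cross (B - A)%C (K - A)%C = cross (B - A)%C (C1 - A)%C)
    by (destruct A, B, C1, K; unfold_coords; ring).
  apply injective_projections; [rewrite bary_fst | rewrite bary_snd]; rewrite ?Hsum; auto;
    revert Hnd; destruct A, B, C1, K; unfold_coords; intros; field; auto.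
Qed.

Lemma sqr_eq_same_sign (x y z k : R) : 0 < k -> x ^ 2 = k -> y ^ 2 = k -> z ^ 2 = k ->
  0 < x * y + y * z + z * x -> x = y /\ x = z.
Proof.
  intros Hk Hx Hy Hz Hs.
  assert (E1 : (x - y) * (x + y) = 0) by nra.
  assert (E2 : (x - z) * (x + z) = 0) by nra.
  destruct (Rmult_integral _ _ E1) as [a|a]; destruct (Rmult_integral _ _ E2) as [b|b].
  - split; lra.
  - exfalso. replace y with x in Hs by lra. replace z with (- x) in Hs by lra. nra.
  - exfalso. replace y with (- x) in Hs by lra. replace z with x in Hs by lra. nra.
  - exfalso. replace y with (- x) in Hs by lra. replace z with (- x) in Hs by lra. nra.
Qed.

Lemma X6_of_side_cross_sqr (A B C1 O K : C) (r2 kap : R) : nondegenerate A B C1 ->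
  norm2 (A - O)%C = r2 -> norm2 (B - O)%C = r2 -> norm2 (C1 - O)%C = r2 ->
  norm2 (K - O)%C < r2 -> 0 < kap ->
  cross (C1 - B)%C (K - B)%C ^ 2 = kap * norm2 (C1 - B)%C ^ 2 ->
  cross (A - C1)%C (K - C1)%C ^ 2 = kap * norm2 (A - C1)%C ^ 2 ->
  cross (B - A)%C (K - A)%C ^ 2 = kap * norm2 (B - A)%C ^ 2 ->
  K = X6 A B C1.
Proof.
  intros Hnd HA HB HC HK Hkap E1 E2 E3.
  pose proof (bary_of_cross A B C1 K Hnd) as HKb.
  destruct (nondegenerate_side_norm2_pos _ _ _ Hnd) as [Pa [Pb Pc]].
  rewrite (norm2_sub_sym C1 B) in E1. rewrite (norm2_sub_sym A C1) in E2.
  rewrite (norm2_sub_sym B A) in E3.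
  set (la := norm2 (B - C1)%C) in *. set (lb := norm2 (C1 - A)%C) in *.
  set (lc := norm2 (A - B)%C) in *.
  set (al := cross (C1 - B)%C (K - B)%C) in *. set (be := cross (A - C1)%C (K - C1)%C) in *.
  set (ga := cross (B - A)%C (K - A)%C) in *.
  assert (Hsum : al + be + ga = cross (B - A)%C (C1 - A)%C)
    by (unfold al, be, ga; destruct A, B, C1, K; unfold_coords; ring).
  unfold nondegenerate in Hnd.
  (* K inside the circumcircle: the power of K, in areal coordinates, rules out mixed signs. *)
  assert (Hpos : 0 < al * be * lc + be * ga * la + ga * al * lb).
  { pose proof (norm2_bary_sub al be ga A B C1 O ltac:(lra)) as E.
    rewrite <- HKb, HA, HB, HC, Hsum in E.
    assert (0 < cross (B - A)%C (C1 - A)%C ^ 2) by (apply pow2_gt_0; auto).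
    unfold la, lb, lc in *.
    rewrite (norm2_sub_sym B C1), (norm2_sub_sym C1 A), (norm2_sub_sym A B) in *.
    nra. }
  set (x := al / la). set (y := be / lb). set (z := ga / lc).
  assert (Eal : al = x * la) by (unfold x; field; lra).
  assert (Ebe : be = y * lb) by (unfold y; field; lra).
  assert (Ega : ga = z * lc) by (unfold z; field; lra).
  rewrite Eal in E1. rewrite Ebe in E2. rewrite Ega in E3.
  assert (Hx2 : x ^ 2 = kap) by (apply (Rmult_eq_reg_r (la ^ 2)); [nra | apply Rgt_not_eq; nra]).
  assert (Hy2 : y ^ 2 = kap) by (apply (Rmult_eq_reg_r (lb ^ 2)); [nra | apply Rgt_not_eq; nra]).
  assert (Hz2 : z ^ 2 = kap) by (apply (Rmult_eq_reg_r (lc ^ 2)); [nra | apply Rgt_not_eq; nra]).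
  assert (Hxyz : 0 < x * y + y * z + z * x).
  { rewrite Eal, Ebe, Ega in Hpos.
    assert (0 < la * lb * lc) by (repeat apply Rmult_lt_0_compat; auto).
    apply (Rmult_lt_reg_r (la * lb * lc)); auto. nra. }
  destruct (sqr_eq_same_sign x y z kap Hkap Hx2 Hy2 Hz2 Hxyz) as [<- <-].
  assert (Hx0 : x <> 0) by (intro e; rewrite Eal, Ebe, Ega, e in Hsum; lra).
  rewrite HKb, X6_norm2, Eal, Ebe, Ega, bary_scale by (fold la lb lc; lra). reflexivity.
Qed.

Lemma X6_brocard_porism_invariant (A0 B0 C0 O : C) (r : R) (F1 F2 : C) (s : R) (A B C1 : C) :
  nondegenerate A0 B0 C0 -> circumcircle O r A0 B0 C0 -> brocard_inellipse F1 F2 s A0 B0 C0 ->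
  in_brocard_porism O r F1 F2 s A B C1 -> X6 A B C1 = X6 A0 B0 C0.
Proof.
  intros Hnd [Hr [HA0 [HB0 HC0]]] [Hb1 [Hb2 Hell0]] [HndT [HA [HB [HC HellT]]]].
  assert (Hcirc : forall X, dist X O = r -> norm2 (X - O)%C = r ^ 2)
    by (intros X HX; rewrite <- dist_sqr, HX; reflexivity).
  assert (EO : O = circumcenter A0 B0 C0) by (apply circumcenter_eq; rewrite ?Hcirc; auto).
  apply first_brocard_point_eq in Hb1; auto. apply second_brocard_point_eq in Hb2; auto.
  subst F1 F2.
  pose proof (inscribed_foci_cross_product _ _ s A0 B0 C0 Hnd Hell0) as T0.
  set (mu := symmedian_ratio A0 B0 C0).
  assert (Side : forall Z P Q, nondegenerate Z P Q ->
    ellipse_inscribed (first_brocard A0 B0 C0) (first_brocard A0 C0 B0) s Z P Q ->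
    dist P O = r -> dist Q O = r ->
    cross (Q - P)%C (X6 A0 B0 C0 - P)%C ^ 2 = mu ^ 2 * norm2 (Q - P)%C ^ 2).
  { intros Z P Q Hn He HP HQ.
    pose proof (inscribed_foci_cross_product _ _ s Z P Q Hn He) as T.
    apply X6_side_cross_sqr; rewrite <- ?EO, ?Hcirc; auto.
    apply (Rmult_eq_reg_l 4); [|lra]. rewrite <- Rmult_assoc, T, <- Rmult_assoc, T0. ring. }
  assert (Hmu : 0 < mu ^ 2).
  { apply pow2_gt_0. unfold mu, symmedian_ratio. unfold nondegenerate in Hnd.
    destruct (nondegenerate_side_norm2_pos _ _ _ Hnd) as [Ha [Hb Hc]].
    apply Rmult_integral_contrapositive. split; [auto | apply Rinv_neq_0_compat; lra]. }
  symmetry. apply (X6_of_side_cross_sqr A B C1 O _ (r ^ 2) (mu ^ 2)); try apply Hcirc; auto.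
  - apply X6_inside_circumcircle; try apply Hcirc; auto.
  - apply (Side A); auto.
  - apply (Side B); auto using nondegenerate_rot, ellipse_inscribed_rot.
  - apply (Side C1); auto using nondegenerate_rot, ellipse_inscribed_rot.
Qed.

Theorem mainTheorem20 (A0 B0 C0 : C) (O : C) (r : R) (F1 F2 : C) (s : R) :
  nondegenerate A0 B0 C0 ->
  ~ equilateral A0 B0 C0 ->
  circumcircle O r A0 B0 C0 ->
  brocard_inellipse F1 F2 s A0 B0 C0 ->
  forall A B C1 : C,
    in_brocard_porism O r F1 F2 s A B C1 ->
    ccw A B C1 ->
    angle_at A B C1 < 2 * PI / 3 ->
    angle_at B C1 A < 2 * PI / 3 ->
    angle_at C1 A B < 2 * PI / 3 ->
    collinear A (X15t (flank_a A B C1)) (X6 A0 B0 C0) /\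
    collinear B (X15t (flank_b A B C1)) (X6 A0 B0 C0) /\
    collinear C1 (X15t (flank_c A B C1)) (X6 A0 B0 C0).
Proof.
  intros Hnd _ Hcirc Hbroc A B C1 Hpor Hccw Ha Hb Hc.
  rewrite <- (X6_brocard_porism_invariant A0 B0 C0 O r F1 F2 s A B C1) by auto.
  split; [|split].
  - apply flank_a_collinear_X6; auto.
  - change (flank_b A B C1) with (flank_a B C1 A). rewrite X6_rot.
    apply flank_a_collinear_X6; auto using ccw_rot.
  - change (flank_c A B C1) with (flank_a C1 A B). rewrite X6_rot, X6_rot.
    apply flank_a_collinear_X6; auto using ccw_rot.
Qed.
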